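(* Let $C_1>0$ and $\underline{\Phi}\in\mathbb{R}$. Let $T>0$ and $\mu\in C([0,T],(0,\infty))$ with $\Phi_h(\mu)\neq0$ (here $\Phi_h(\mu)$ is computed with terminal time $T$). Consider: (a) there exist $\lambda_1,\lambda_2\in\mathbb{R}$ with $\mathcal{G}(\mu)=C_1$, $\Phi(z_\mu(T))=\underline{\Phi}$, $\lambda_1 g'(\mu(t))+\lambda_2\Phi_h(\mu)=0$ for all $t\in[0,T]$, and $1+\lambda_1 g(\mu(T))+\lambda_2\Phi_h(\mu)\mu(T)=0$ (the first-order necessary conditions for a stationary point of $(\mu,T)\mapsto T$ subject to $\mathcal{G}(\mu)=C_1$ and $\Phi(z_\mu(T))=\underline{\Phi}$); (b) for a given $C_2>0$, there exist $\lambda_{1,\mathrm{ref}},\lambda_{2,\mathrm{ref}}\in\mathbb{R}$ with $\mathcal{G}(\mu)=C_1$, $\mathcal{I}(\mu)=C_2$, $\lambda_{1,\mathrm{ref}}g'(\mu(t))+\lambda_{2,\mathrm{ref}}=0$ for all $t\in[0,T]$, and $1+\lambda_{1,\mathrm{ref}}g(\mu(T))+\lambda_{2,\mathrm{ref}}\mu(T)=0$ (the first-order necessary conditions for a stationary point of $(\mu,T)\mapsto T$ subject to $\mathcal{G}(\mu)=C_1$ and $\mathcal{I}(\mu)=C_2$). Then: if (a) holds, then (b) holds with $C_2:=\mathcal{I}(\mu)$, which satisfies $\Phi(\hat z(C_2))=\underline{\Phi}$, and with $\lambda_{1,\mathrm{ref}}=\lambda_1$, $\lambda_{2,\mathrm{ref}}=\lambda_2\Phi_h(\mu)$.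 Conversely, if (b) holds for some $C_2>0$ with $\Phi(\hat z(C_2))=\underline{\Phi}$, then (a) holds with $\lambda_1=\lambda_{1,\mathrm{ref}}$, $\lambda_2=\lambda_{2,\mathrm{ref}}/\Phi_h(\mu)$.
   Context: Standing setup: $n,s\ge1$, $p\in\mathbb{R}^s$, $z_0\in\mathbb{R}^n$; $h:\mathbb{R}^n\times\mathbb{R}^s\to\mathbb{R}^n$ is continuously differentiable in its first argument and such that the autonomous initial value problem $\hat z'(\tau)=h(\hat z(\tau),p)$, $\hat z(0)=z_0$ has a unique solution $\hat z$ defined for all $\tau\in\mathbb{R}$. For $T>0$ and $\mu\in C([0,T],\mathbb{R})$, $z_\mu:[0,T]\to\mathbb{R}^n$ denotes the solution of $\dot z(t)=\mu(t)h(z(t),p)$, $z(0)=z_0$. $\Phi:\mathbb{R}^n\to\mathbb{R}$ is continuously differentiable, and $g:\mathbb{R}\to\mathbb{R}$ is continuously differentiable and positive. Define $\mathcal{G}(\mu):=\int_0^T g(\mu(t))\,\mathrm{d}t$, $\mathcal{I}(\mu):=\int_0^T\mu(t)\,\mathrm{d}t$, and $\Phi_h(\mu):=\nabla\Phi(z_\mu(T))\cdot h(z_\mu(T),p)$ (the Lie derivative of $\Phi$ along $h$ at the terminal state). *)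

From Stdlib Require Import Reals Lra.
From Stdlib Require Fin.
Open Scope R_scope.

Definition Rn (n : nat) : Type := Fin.t n -> R.

Fixpoint fsum (n : nat) : (Fin.t n -> R) -> R :=
  match n return (Fin.t n -> R) -> R with
  | O => fun _ => 0
  | S m => fun f => f Fin.F1 + fsum m (fun i => f (Fin.FS i))
  end.

Definition dot {n} (u v : Rn n) : R := fsum n (fun i => u i * v i).
Definition vnorm {n} (u : Rn n) : R := fsum n (fun i => Rabs (u i)).
Definition vsub {n} (u v : Rn n) : Rn n := fun i => u i - v i.
Definition vadd {n} (u v : Rn n) : Rn n := fun i => u i + v i.
Definition vscal {n} (a : R) (u : Rn n) : Rn n := fun i => a * u i.

Definition is_linear {n m} (L : Rn n -> Rn m) : Prop :=
  forall (a b : R) (u v : Rn n) (i : Fin.t m),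
    L (vadd (vscal a u) (vscal b v)) i = a * L u i + b * L v i.

Definition has_derivative {n m} (F : Rn n -> Rn m) (DF : Rn n -> Rn n -> Rn m) : Prop :=
  forall x : Rn n, is_linear (DF x) /\
    forall eps, 0 < eps -> exists delta, 0 < delta /\
      forall y, vnorm (vsub y x) < delta ->
        vnorm (vsub (vsub (F y) (F x)) (DF x (vsub y x))) <= eps * vnorm (vsub y x).

Definition C1_map {n m} (F : Rn n -> Rn m) : Prop :=
  exists DF, has_derivative F DF /\
    forall x eps, 0 < eps -> exists delta, 0 < delta /\
      forall y, vnorm (vsub y x) < delta ->
        forall v, vnorm (vsub (DF y v) (DF x v)) <= eps * vnorm v.

Definition C1_with_gradient {n} (Phi : Rn n -> R) (G : Rn n -> Rn n) : Prop :=
  (forall x eps, 0 < eps -> exists delta, 0 < delta /\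
      forall y, vnorm (vsub y x) < delta ->
        Rabs (Phi y - Phi x - dot (G x) (vsub y x)) <= eps * vnorm (vsub y x)) /\
  (forall x eps, 0 < eps -> exists delta, 0 < delta /\
      forall y, vnorm (vsub y x) < delta -> vnorm (vsub (G y) (G x)) < eps).

(** Derivative of a real function relative to the interval [a,b]
    (one-sided at the endpoints). *)
Definition deriv_within (a b : R) (f : R -> R) (t l : R) : Prop :=
  forall eps, 0 < eps -> exists delta, 0 < delta /\
    forall u, a <= u <= b -> u <> t -> Rabs (u - t) < delta ->
      Rabs ((f u - f t) / (u - t) - l) < eps.

Definition continuous_on (a b : R) (f : R -> R) : Prop :=
  forall t, a <= t <= b -> forall eps, 0 < eps -> exists delta, 0 < delta /\
    forall u, a <= u <= b -> Rabs (u - t) < delta -> Rabs (f u - f t) < eps.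

Definition RInt_eq (f : R -> R) (a b v : R) : Prop :=
  exists pr : Riemann_integrable f a b, RiemannInt pr = v.

Definition is_sol_mu {n s} (h : Rn n -> Rn s -> Rn n) (p : Rn s) (z0 : Rn n)
    (T : R) (mu : R -> R) (z : R -> Rn n) : Prop :=
  z 0 = z0 /\
  forall t, 0 <= t <= T -> forall i : Fin.t n,
    deriv_within 0 T (fun u => z u i) t (mu t * h (z t) p i).

Definition is_sol_hat {n s} (h : Rn n -> Rn s -> Rn n) (p : Rn s) (z0 : Rn n)
    (zh : R -> Rn n) : Prop :=
  zh 0 = z0 /\
  forall tau (i : Fin.t n), derivable_pt_lim (fun u => zh u i) tau (h (zh tau) p i).

(** First-order conditions (a): with Phih = Phi_h(mu). *)
Definition cond_a (g dg : R -> R) (mu : R -> R) (T C1 Phibar : R)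
    (PhizT Phih : R) (l1 l2 : R) : Prop :=
  RInt_eq (fun t => g (mu t)) 0 T C1 /\
  PhizT = Phibar /\
  (forall t, 0 <= t <= T -> l1 * dg (mu t) + l2 * Phih = 0) /\
  1 + l1 * g (mu T) + l2 * Phih * mu T = 0.

Definition cond_b (g dg : R -> R) (mu : R -> R) (T C1 C2 : R) (l1 l2 : R) : Prop :=
  RInt_eq (fun t => g (mu t)) 0 T C1 /\
  RInt_eq mu 0 T C2 /\
  (forall t, 0 <= t <= T -> l1 * dg (mu t) + l2 = 0) /\
  1 + l1 * g (mu T) + l2 * mu T = 0.

(* The state equation z' = mu h(z) is the autonomous equation zh' = h(zh) run on the
   clock tau(t) = int_0^t mu, so by uniqueness z(T) = zh(int_0^T mu).  Hence the
   terminal constraint Phi(z_mu(T)) = Phibar of problem (a) is the constraint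
   Phi(zh(C2)) = Phibar with C2 := I(mu), and the two systems of first-order
   conditions correspond to each other by rescaling the second multiplier with
   Phi_h(mu) <> 0. *)

From Stdlib Require Import Reals Lra.
From Coquelicot Require Import Coquelicot.
Open Scope R_scope.

Section ClampExtension.

Variables a b : R.
Hypothesis Hab : a <= b.

Definition clamp (t : R) : R := Rmax a (Rmin b t).

Lemma clamp_mem t : a <= clamp t <= b.
Proof. unfold clamp, Rmax, Rmin; repeat destruct Rle_dec; lra. Qed.

Lemma clamp_id t : a <= t <= b -> clamp t = t.
Proof. intros Ht; unfold clamp, Rmax, Rmin; repeat destruct Rle_dec; lra. Qed.

Lemma clamp_contracting x y : Rabs (clamp x - clamp y) <= Rabs (x - y).
Proof.
  unfold clamp, Rmax, Rmin.
  repeat destruct Rle_dec; unfold Rabs; repeat destruct Rcase_abs; lra.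
Qed.

Lemma continuous_on_extension (f : R -> R) : continuous_on a b f ->
  exists F : R -> R, (forall x, continuous F x) /\ (forall t, a <= t <= b -> F t = f t).
Proof.
  intros Hf. exists (fun t => f (clamp t)). split.
  - intros x. apply continuity_pt_filterlim. intros eps Heps.
    destruct (Hf (clamp x) (clamp_mem x) eps Heps) as [d [Hd Hfd]].
    exists d; split; [exact Hd|]. intros y [_ Hy]. simpl in *. unfold R_dist in *.
    apply Hfd; [apply clamp_mem|].
    eapply Rle_lt_trans; [apply clamp_contracting | exact Hy].
  - intros t Ht. now rewrite clamp_id.
Qed.

End ClampExtension.

Lemma RInt_eq_RInt (f : R -> R) (a b v : R) : RInt_eq f a b v -> RInt f a b = v.
Proof. intros [pr <-]. apply RInt_Reals. Qed.

Lemma RInt_eq_of_ex_RInt (f : R -> R) (a b : R) : ex_RInt f a b -> RInt_eq f a b (RInt f a b).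
Proof. intros Hf. exists (ex_RInt_Reals_0 f a b Hf). symmetry. apply RInt_Reals. Qed.

Lemma RInt_ext_on (f F : R -> R) (a b : R) : a <= b ->
  (forall t, a <= t <= b -> F t = f t) -> RInt F a b = RInt f a b.
Proof.
  intros Hab HF. apply RInt_ext. intros x Hx.
  rewrite Rmin_left, Rmax_right in Hx by lra. apply HF; lra.
Qed.

Lemma continuous_on_ex_RInt (f : R -> R) (a b : R) : a <= b ->
  continuous_on a b f -> ex_RInt f a b.
Proof.
  intros Hab Hf. destruct (continuous_on_extension a b Hab f Hf) as [F [HF HFf]].
  apply (ex_RInt_ext F).
  - intros x Hx. rewrite Rmin_left, Rmax_right in Hx by lra. apply HFf; lra.
  - apply (@ex_RInt_continuous R_CompleteNormedModule). intros; apply HF.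
Qed.

Lemma continuous_on_RInt_gt_0 (f : R -> R) (a b : R) : a < b ->
  continuous_on a b f -> (forall t, a <= t <= b -> 0 < f t) -> 0 < RInt f a b.
Proof.
  intros Hab Hf Hpos.
  destruct (continuous_on_extension a b (Rlt_le _ _ Hab) f Hf) as [F [HF HFf]].
  rewrite <- (RInt_ext_on f F) by (auto; lra).
  apply RInt_gt_0; auto. intros x Hx. rewrite HFf by lra. apply Hpos; lra.
Qed.

Lemma derivable_pt_lim_deriv_within (a b : R) (f : R -> R) (t l : R) :
  derivable_pt_lim f t l -> deriv_within a b f t l.
Proof.
  intros Hf eps Heps. destruct (Hf eps Heps) as [d Hd].
  exists d. split; [apply cond_pos|]. intros u _ Hu Hut.
  replace u with (t + (u - t)) at 1 by ring.
  apply Hd; [lra | exact Hut].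
Qed.

Section TimeChange.

Variables (n s : nat) (h : Rn n -> Rn s -> Rn n) (p : Rn s) (z0 : Rn n).
Variable zh : R -> Rn n.
Hypothesis Hzh : is_sol_hat h p z0 zh.

Lemma is_sol_mu_time_change (T : R) (mu m : R -> R) :
  (forall x, continuous m x) -> (forall t, 0 <= t <= T -> m t = mu t) ->
  is_sol_mu h p z0 T mu (fun t => zh (RInt m 0 t)).
Proof.
  intros Hm Hmmu. destruct Hzh as [Hzh0 Hzh'].
  set (tau := fun t => RInt m 0 t).
  assert (Htau : forall t, derivable_pt_lim tau t (m t)).
  { intros t. apply is_derive_Reals, (@is_derive_RInt R_NormedModule m tau 0); [|apply Hm].
    apply filter_forall. intros x. apply (@RInt_correct R_CompleteNormedModule).
    apply (@ex_RInt_continuous R_CompleteNormedModule). intros; apply Hm. }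
  split.
  - change (zh (tau 0) = z0). unfold tau. now rewrite RInt_point.
  - intros t Ht i. apply derivable_pt_lim_deriv_within.
    rewrite <- (Hmmu t Ht), Rmult_comm.
    exact (derivable_pt_lim_comp tau (fun u => zh u i) t _ _ (Htau t) (Hzh' (tau t) i)).
Qed.

Lemma is_sol_mu_terminal (T : R) (mu : R -> R) (z : R -> Rn n) :
  0 <= T -> continuous_on 0 T mu ->
  (forall w, is_sol_mu h p z0 T mu w -> forall t, 0 <= t <= T -> w t = z t) ->
  z T = zh (RInt mu 0 T).
Proof.
  intros HT Hmu Huniq.
  destruct (continuous_on_extension 0 T HT mu Hmu) as [m [Hm Hmmu]].
  rewrite <- (RInt_ext_on mu m) by assumption.
  symmetry. apply (Huniq (fun t => zh (RInt m 0 t))); [|lra]. now apply is_sol_mu_time_change.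
Qed.

End TimeChange.

Theorem theorem3
  (n s : nat) (Hn : (1 <= n)%nat) (Hs : (1 <= s)%nat)
  (p : Rn s) (z0 : Rn n) (h : Rn n -> Rn s -> Rn n)
  (Hh : forall q : Rn s, C1_map (fun x => h x q))
  (zh : R -> Rn n) (Hzh : is_sol_hat h p z0 zh)
  (Hzh_uniq : forall w : R -> Rn n, is_sol_hat h p z0 w -> forall tau, w tau = zh tau)
  (Phi : Rn n -> R) (gradPhi : Rn n -> Rn n) (HPhi : C1_with_gradient Phi gradPhi)
  (g dg : R -> R) (Hdg : forall x, derivable_pt_lim g x (dg x))
  (Hdg_cont : continuity dg) (Hg_pos : forall x, 0 < g x)
  (C1 Phibar : R) (HC1 : 0 < C1)
  (T : R) (HT : 0 < T) (mu : R -> R)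
  (Hmu_cont : continuous_on 0 T mu) (Hmu_pos : forall t, 0 <= t <= T -> 0 < mu t)
  (z : R -> Rn n) (Hz : is_sol_mu h p z0 T mu z)
  (Hz_uniq : forall w : R -> Rn n, is_sol_mu h p z0 T mu w ->
               forall t, 0 <= t <= T -> w t = z t)
  (HPhih : dot (gradPhi (z T)) (h (z T) p) <> 0) :
  let Phih := dot (gradPhi (z T)) (h (z T) p) in
  (forall l1 l2 : R,
     cond_a g dg mu T C1 Phibar (Phi (z T)) Phih l1 l2 ->
     exists C2, RInt_eq mu 0 T C2 /\ 0 < C2 /\ Phi (zh C2) = Phibar /\
       cond_b g dg mu T C1 C2 l1 (l2 * Phih)) /\
  (forall C2 l1r l2r : R,
     0 < C2 -> Phi (zh C2) = Phibar ->
     cond_b g dg mu T C1 C2 l1r l2r ->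
     cond_a g dg mu T C1 Phibar (Phi (z T)) Phih l1r (l2r / Phih)).
Proof.
  intros Phih.
  assert (HzT : z T = zh (RInt mu 0 T)).
  { apply (is_sol_mu_terminal n s h p z0 zh Hzh); auto; lra. }
  split.
  - intros l1 l2 (HG & HPhiT & Hstat & Htrans).
    exists (RInt mu 0 T).
    assert (HI : RInt_eq mu 0 T (RInt mu 0 T))
      by (apply RInt_eq_of_ex_RInt, continuous_on_ex_RInt; [lra | exact Hmu_cont]).
    repeat split; auto.
    + now apply continuous_on_RInt_gt_0.
    + now rewrite <- HzT.
  - intros C2 l1r l2r _ HPhiC2 (HG & HI & Hstat & Htrans).
    repeat split; auto.
    + now rewrite HzT, (RInt_eq_RInt mu 0 T C2 HI).
    + intros t Ht. field_simplify; [apply Hstat; exact Ht | exact HPhih].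
    + field_simplify; [lra | exact HPhih].
Qed.
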